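(* For every $n$-vertex graph $G$ (with $n\ge 2$), there exists a graph $G'$ with fewer than $n^2$ vertices such that $G$ is an induced subgraph of $G'$ and $G'$ has sd-degeneracy at most $1$.
   Context: For a graph $G$ and distinct vertices $u,v$, let $N_G(u)$ be the open neighborhood and $\mathrm{sd}_G(u,v) := |(N_G(u)\setminus\{v\}) \triangle (N_G(v)\setminus\{u\})|$, where $\triangle$ is symmetric difference of sets. The sd-degeneracy $\mathrm{sdd}(G)$ of a graph $G$ is the smallest non-negative integer $d$ such that either $|V(G)|=1$, or there exist distinct $u,v\in V(G)$ with $\mathrm{sd}_G(u,v)\le d$ and $\mathrm{sdd}(G-v)\le d$. Equivalently, $\mathrm{sdd}(G)\le d$ iff there is an ordering $v_1,\dots,v_n$ of $V(G)$ such that for every $i\in[n-1]$ there is $j>i$ with $\mathrm{sd}_{G_i}(v_i,v_j)\le d$, where $G_i := G-\{v_k : k<i\}$. *)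

From mathcomp Require Import all_boot.
Set Implicit Arguments. Unset Strict Implicit. Unset Printing Implicit Defensive.

Definition simple_graph (T : finType) (e : rel T) : Prop :=
  symmetric e /\ irreflexive e.

Definition nbhd_in (T : finType) (e : rel T) (S : {set T}) (u : T) : {set T} :=
  [set w in S | e u w].

Definition sd_in (T : finType) (e : rel T) (S : {set T}) (u v : T) : nat :=
  let A := nbhd_in e S u :\ v in
  let B := nbhd_in e S v :\ u in
  #|(A :\: B) :|: (B :\: A)|.

Inductive sdd_le (T : finType) (e : rel T) (d : nat) : {set T} -> Prop :=
| sdd_single (S : {set T}) : #|S| = 1 -> sdd_le e d S
| sdd_step (S : {set T}) (u v : T) :
    u \in S -> v \in S -> u != v ->
    sd_in e S u v <= d -> sdd_le e d (S :\ v) -> sdd_le e d S.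

From mathcomp Require Import all_boot zify.
Set Implicit Arguments. Unset Strict Implicit. Unset Printing Implicit Defensive.

(* Take the vertices (i, j) with i <= j < n: the vertex (i, i) is a copy of the
   vertex i of G, and for i < j the vertex (i, j) is a copy of i that keeps only
   its neighbours c >= j among the copies (c, c).  Deleting the vertices in
   lexicographic order, each deleted (i, j) has a twin up to one neighbour: the
   next copy (i, j + 1) of its row, which only misses (j, j), or, at the end of
   a row, the last copy (i + 1, n - 1) of the next row.  There are n(n+1)/2 < n^2
   vertices in total. *)

Lemma sdd_le_by_rank (T : finType) (e : rel T) d (r : T -> nat) (p : T -> T)
    (S : {set T}) :
  injective r -> S != set0 ->
  (forall v, v \in S -> (exists2 w, w \in S & r v < r w) ->
     [/\ p v \in S, r v < r (p v)
       & sd_in e [set w in S | r v <= r w] (p v) v <= d]) ->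
  sdd_le e d S.
Proof.
move=> r_inj; have [k] := ubnP #|S|; elim: k S => // k IH S ltSk S_n0 hp.
have [x0 Sx0] := set0Pn _ S_n0.
case: (@arg_minnP _ x0 (fun z => z \in S) r Sx0) => v Sv v_min.
have [/eqP S1|S_n1] := boolP (#|S| == 1); first exact: sdd_single.
have [w Sv_w] : exists w, w \in S :\ v.
  by apply/set0Pn; rewrite -card_gt0; move: S_n1; rewrite (cardsD1 v) Sv; case: #|_|.
have v_lt w' : w' \in S :\ v -> r v < r w'.
  rewrite !inE ltn_neqAle => /andP[w'v Sw']; rewrite v_min // andbT.
  by apply: contra w'v => /eqP/r_inj ->.
have [Spv ltpv sd_pv] := hp v Sv (ex_intro2 _ _ w (subsetP (subD1set S v) _ Sv_w) (v_lt _ Sv_w)).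
have upS : [set w in S | r v <= r w] = S.
  by apply/setP => z; rewrite inE; case: (boolP (z \in S)) => //= /v_min.
rewrite upS in sd_pv.
apply: (sdd_step Spv Sv) => //; first by apply: contraTneq ltpv => ->; rewrite ltnn.
apply: IH; [by move: ltSk; rewrite (cardsD1 v S) Sv | by apply/set0Pn; exists w |].
move=> v' Sv_v' [w' Sv_w' ltvw'].
have Sv' : v' \in S by move: Sv_v'; rewrite inE => /andP[].
have [Spv' ltpv' sd_pv'] := hp v' Sv' (ex_intro2 _ _ w' (subsetP (subD1set S v) _ Sv_w') ltvw').
have lt_v_v' := v_lt _ Sv_v'.
split => //; first by rewrite !inE Spv' andbT; apply: contraTneq ltpv' => ->; rewrite -leqNgt ltnW.
suff -> : [set w in S :\ v | r v' <= r w] = [set w in S | r v' <= r w] by [].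
apply/setP => z; rewrite !inE.
by case: (eqVneq z v) => [->|//]; rewrite Sv /= leqNgt lt_v_v'.
Qed.

Lemma sdd_le_imset (U T : finType) (g : U -> T) (e : rel T) d (A : {set U}) :
  injective g -> sdd_le e d (g @: A) -> sdd_le (fun x y => e (g x) (g y)) d A.
Proof.
move=> g_inj sdd_gA; move defX: (g @: A) sdd_gA => X sdd_X.
elim: sdd_X A defX => [S S1|S u v Su Sv uv sd_uv _ IH] A defS.
  by apply: sdd_single; rewrite -(card_imset _ g_inj) defS.
subst S; case/imsetP: Su => u' Au' ?; case/imsetP: Sv => v' Av' ?; subst u v.
apply: (sdd_step Au' Av') => //; first by rewrite (inj_eq g_inj) in uv.
- apply: leq_trans _ sd_uv; rewrite /sd_in -(card_imset _ g_inj).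
  apply: subset_leq_card; apply/subsetP => _ /imsetP[y + ->].
  by rewrite /nbhd_in !inE !(mem_imset _ _ g_inj) !(inj_eq g_inj).
- apply: IH; apply/setP => y; rewrite !inE.
  apply/imsetP/andP => [[y' Ay' ->]|[yv /imsetP[y' Ay' Ey]]].
    by move: Ay'; rewrite !inE (mem_imset _ _ g_inj) (inj_eq g_inj) => /andP[-> ->].
  by subst y; exists y' => //; rewrite !inE Ay' andbT -(inj_eq g_inj).
Qed.

Lemma imset_enum_val (T : finType) (A : {set T}) :
  [set enum_val i | i in [set: 'I_#|A|]] = A.
Proof.
apply/setP => x; apply/imsetP/idP => [[i _ ->]|Ax]; first exact: enum_valP.
by exists (enum_rank_in Ax x); rewrite ?enum_rankK_in.
Qed.

Section Cells.

Variable n : nat.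

Definition cell := ('I_n.+1 * 'I_n.+1)%type.

Definition triangle : {set cell} := [set x : cell | x.1 <= x.2].

Definition key (x : cell) : nat := x.1 * n.+1 + x.2.

Definition succ (x : cell) : cell :=
  if x.2 < n then (x.1, inord x.2.+1) else (inord x.1.+1, x.2).

Lemma key_lt (x y : cell) :
  (key x < key y) = (x.1 < y.1) || ((x.1 == y.1 :> nat) && (x.2 < y.2)).
Proof. case: x y => [[a ?] [b ?]] [[c ?] [d ?]]; rewrite /key /=; nia. Qed.

Lemma key_div (x : cell) : key x %/ n.+1 = x.1.
Proof. by rewrite /key divnMDl // divn_small ?addn0. Qed.

Lemma key_mod (x : cell) : key x %% n.+1 = x.2.
Proof. by rewrite /key modnMDl modn_small. Qed.

Lemma key_inj : injective key.
Proof.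
move=> x y kxy; rewrite [x]surjective_pairing [y]surjective_pairing.
by congr (_, _); apply: val_inj; rewrite /= -?key_div -?key_mod kxy.
Qed.

Lemma card_triangle_lt : 0 < n -> #|triangle| < n.+1 ^ 2.
Proof.
move=> n_gt0; have <- : #|[set: cell]| = n.+1 ^ 2.
  by rewrite cardsT card_prod card_ord mulnn.
apply: proper_card; rewrite properT; apply/eqP => triT.
by have := in_setT ((inord 1, ord0) : cell); rewrite -triT inE /= inordK.
Qed.

Lemma triangle_not_last (v w : cell) : v \in triangle -> key v < key w -> v.1 < n.
Proof.
rewrite inE key_lt => v12; have w1_le := ltn_ord w.1; have w2_le := ltn_ord w.2.
by case/orP => [|/andP[/eqP v1_w1 v2_w2]]; lia.
Qed.

Lemma succ_upper (v : cell) : v \in triangle -> v.1 < n ->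
  succ v \in triangle /\ key v < key (succ v).
Proof.
rewrite !inE key_lt /succ => v12 v1n; have v2_le := ltn_ord v.2.
by case: ifP => /= [|/negbT] v2n; rewrite inordK; lia.
Qed.

Lemma succ_first_le (v w : cell) : key v < key w -> (succ v).1 <= w.1.
Proof.
rewrite key_lt /succ => lt_vw; have w1_le := ltn_ord w.1; have w2_le := ltn_ord w.2.
by case: ifP => /= [|/negbT] v2n; rewrite ?inordK; lia.
Qed.

End Cells.

Section Graph.

Variables (n : nat) (e : rel 'I_n.+1).

Definition attached (x : cell n) (c : 'I_n.+1) : bool :=
  [&& x.1 < x.2, x.2 <= c & e x.1 c].

Definition adj (x y : cell n) : bool :=
  [|| [&& x.1 == x.2, y.1 == y.2 & e x.1 y.1],
      (x.1 == x.2) && attached y x.1 | (y.1 == y.2) && attached x y.1].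

Lemma adj_upper (x w : cell n) : x.1 <= x.2 -> w.1 <= w.2 -> x.1 <= w.1 ->
  adj x w = [&& w.1 == w.2, x.2 <= w.1 & e x.1 w.1].
Proof.
move=> x12 w12 xw1; rewrite /adj /attached.
case: (eqVneq x.1 x.2) => [x_diag|x_off]; case: (eqVneq w.1 w.2) => [w_diag|w_off] //=.
- by rewrite -x_diag -w_diag xw1 !ltnn /= !orbF.
- rewrite orbF; apply/negbTE/and3P => -[w1_lt w2_le _].
  by move: (leq_trans w2_le xw1); rewrite leqNgt w1_lt.
- by rewrite ltn_neqAle x_off x12.
Qed.

Lemma succ_threshold (v : cell n) (c : 'I_n.+1) : c != v.2 :> nat ->
  (v.2 <= c) && e v.1 c = ((succ v).2 <= c) && e (succ v).1 c.
Proof.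
rewrite /succ => cv; case: ifP => [v2n|/negbT v2n] /=.
  by rewrite inordK // leq_eqVlt eq_sym (negbTE cv).
have c_lt : c < v.2 by move: (ltn_ord c) (ltn_ord v.2) cv v2n; lia.
by rewrite leqNgt c_lt.
Qed.

Lemma adj_diag (i j : 'I_n.+1) : adj (i, i) (j, j) = e i j.
Proof. by rewrite /adj /attached /= !eqxx !ltnn /= !orbF. Qed.

Hypotheses (e_sym : symmetric e) (e_irr : irreflexive e).

Lemma adj_sym : symmetric adj.
Proof.
move=> x y; rewrite /adj (e_sym y.1) [[&& y.1 == _, _ & _]]andbCA.
by congr (_ || _); rewrite orbC.
Qed.

Lemma adj_irr : irreflexive adj.
Proof. by move=> x; rewrite /adj /attached e_irr !andbF. Qed.

Lemma sd_succ (v : cell n) : v \in triangle n -> v.1 < n ->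
  sd_in adj [set w in triangle n | key v <= key w] (succ v) v <= 1.
Proof.
move=> v_tri v1n; have [sv_tri _] := succ_upper v_tri v1n.
move: v_tri sv_tri; rewrite !inE => v12 sv12.
apply: leq_trans (_ : #|[set (v.2, v.2)]| <= 1); last by rewrite cards1.
apply: subset_leq_card; apply/subsetP => w; rewrite /nbhd_in !inE.
case: (eqVneq w (v.2, v.2)) => // w_v2.
case: (eqVneq w v) => [->|w_v]; first by rewrite adj_irr !andbF.
case: (eqVneq w (succ v)) => [->|w_sv]; first by rewrite adj_irr !andbF.
case/boolP: ((w.1 <= w.2) && (key v <= key w)) => //= /andP[w12 le_vw].
have lt_vw : key v < key w.
  by rewrite ltn_neqAle le_vw andbT; apply: contra w_v => /eqP/key_inj ->.
have v1_w1 : v.1 <= w.1.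
  by move: lt_vw; rewrite key_lt => /orP[/ltnW //|/andP[/eqP-> _]].
rewrite (adj_upper v12 w12 v1_w1) (adj_upper sv12 w12 (succ_first_le lt_vw)).
case: (eqVneq w.1 w.2) => //= w_diag; rewrite -succ_threshold.
  by case: (v.2 <= w.1); case: (e v.1 w.1).
apply: contraNneq w_v2 => w1_v2; rewrite [w]surjective_pairing -w_diag.
by apply/eqP; congr (_, _); apply: val_inj.
Qed.

Lemma sdd_triangle : sdd_le adj 1 (triangle n).
Proof.
apply: (sdd_le_by_rank (r := @key n) (p := @succ n)); first exact: key_inj.
  by apply/set0Pn; exists (ord0, ord0); rewrite inE.
move=> v v_tri [w _ lt_vw]; have v1n := triangle_not_last v_tri lt_vw.
by have [sv_tri lt_v_sv] := succ_upper v_tri v1n; split=> //; exact: sd_succ.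
Qed.

End Graph.

Theorem proposition1p1 (n : nat) (e : rel 'I_n) :
  2 <= n -> simple_graph e ->
  exists (m : nat) (e' : rel 'I_m) (f : 'I_n -> 'I_m),
    [/\ m < n ^ 2, simple_graph e', injective f,
        (forall x y, e' (f x) (f y) = e x y)
      & sdd_le e' 1 [set: 'I_m]].
Proof.
case: n e => [|[|n]] e // _ [e_sym e_irr].
have diag i : (i, i) \in triangle n.+1 by rewrite inE.
exists #|triangle n.+1|, (fun x y => adj e (enum_val x) (enum_val y)),
  (fun i => enum_rank_in (diag i) (i, i)).
split.
- exact: card_triangle_lt.
- by split=> [x y|x]; [apply: adj_sym | apply: adj_irr].
- by move=> i j /(congr1 enum_val); rewrite !enum_rankK_in // => -[].
- by move=> i j; rewrite !enum_rankK_in // adj_diag.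
- apply: sdd_le_imset; first exact: enum_val_inj.
  by rewrite imset_enum_val; apply: sdd_triangle.
Qed.
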